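(* Let $X$ be a countable set and let $w$ be an essentially locally finite weight on $X$. Then the pseudo metric $\delta_w$ is discrete, i.e. $(X,\delta_w)$ is a discrete space.
   Context: A weight on $X$ is a symmetric function $w:X\times X\to[0,\infty]$ with $w(x,y)=0$ if and only if $x=y$. It is essentially locally finite if $\#\{y\in X\mid w(x,y)<R\}<\infty$ for all $x\in X$ and $R>0$. A path from $x$ to $y$ is a finite sequence $(x_0,\dots,x_n)$ of pairwise distinct elements of $X$ with $x_0=x$, $x_n=y$, and $\delta_w(x,y):=\inf\{\sum_{i=1}^n w(x_{i-1},x_i)\mid (x_0,\dots,x_n)\text{ a path from }x\text{ to }y\}$ (a pseudo metric, possibly taking the value $\infty$). *)

From HB Require Import structures.
From mathcomp Require Import all_boot all_order all_algebra.
From mathcomp Require Import all_classical all_reals.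
From mathcomp Require Import ereal.
Set Implicit Arguments. Unset Strict Implicit. Unset Printing Implicit Defensive.
Import Order.TTheory GRing.Theory Num.Theory.
Local Open Scope classical_set_scope.
Local Open Scope ring_scope.
Local Open Scope ereal_scope.

Definition is_weight (R : realType) (X : eqType) (w : X -> X -> \bar R) : Prop :=
  (forall x y, w x y = w y x) /\
  (forall x y, 0 <= w x y) /\
  (forall x y, w x y = 0 <-> x = y).

Definition ess_locally_finite (R : realType) (X : eqType) (w : X -> X -> \bar R) : Prop :=
  forall (x : X) (r : R), (0 < r)%R -> finite_set [set y | w x y < r%:E].

Definition is_path (X : eqType) (x y : X) (s : seq X) : Prop :=
  uniq (x :: s) /\ last x s = y.

Definition path_length (R : realType) (X : eqType) (w : X -> X -> \bar R)
  (x : X) (s : seq X) : \bar R :=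
  \sum_(p <- zip (x :: s) s) w p.1 p.2.

Definition delta_w (R : realType) (X : eqType) (w : X -> X -> \bar R) (x y : X) : \bar R :=
  ereal_inf [set path_length w x s | s in [set s | is_path x y s]].

Definition discrete_pseudometric (R : realType) (X : Type) (d : X -> X -> \bar R) : Prop :=
  forall x : X, exists e : R, (0 < e)%R /\ forall y, d x y < e%:E -> y = x.

From HB Require Import structures.
From mathcomp Require Import all_boot all_order all_algebra.
From mathcomp Require Import all_classical all_reals.
From mathcomp Require Import ereal.
Set Implicit Arguments. Unset Strict Implicit. Unset Printing Implicit Defensive.
Import Order.TTheory GRing.Theory Num.Theory.
Local Open Scope classical_set_scope.
Local Open Scope ring_scope.
Local Open Scope ereal_scope.

(* Every path from x to some y <> x starts with a step x -> a, a <> x, so its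
   length is at least w x a. By essential local finiteness only finitely many a
   have w x a < 1, hence w x a is bounded below by a positive constant e for
   all a <> x, and delta_w x y >= e for every y <> x. *)

Section PositiveLowerBound.
Variable R : realType.

Lemma seq_pos_lbound (T : eqType) (f : T -> \bar R) (s : seq T) :
  (forall z, z \in s -> 0 < f z) ->
  exists2 e : R, (0 < e)%R & forall z, z \in s -> e%:E <= f z.
Proof.
elim: s => [|a s IHs] f_gt0; first by exists 1%R.
have [|e e_gt0 le_e] := IHs; first by move=> z zs; apply: f_gt0; rewrite inE zs orbT.
have := f_gt0 a (mem_head a s); case fa: (f a) => [r| |] //= r_gt0.
- exists (Num.min e r); first by rewrite lt_min e_gt0 -lte_fin.
  move=> z; rewrite inE => /predU1P[->|zs]; first by rewrite fa lee_fin ge_min lexx orbT.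
  by apply: le_trans (le_e z zs); rewrite lee_fin ge_min lexx.
- by exists e => // z; rewrite inE => /predU1P[->|/le_e//]; rewrite fa leey.
Qed.

Lemma finite_set_pos_lbound (T : choiceType) (A : set T) (f : T -> \bar R) :
  finite_set A -> (forall z, A z -> 0 < f z) ->
  exists2 e : R, (0 < e)%R & forall z, A z -> e%:E <= f z.
Proof.
move=> finA f_gt0.
have [|e e_gt0 le_e] := @seq_pos_lbound _ f (finmap.enum_fset (fset_set A)).
  by move=> z; rewrite in_fset_set // inE; apply: f_gt0.
by exists e => // z Az; apply: le_e; rewrite in_fset_set // inE.
Qed.

End PositiveLowerBound.

Section WeightedPaths.
Variables (R : realType) (X : eqType) (w : X -> X -> \bar R).
Hypothesis w_ge0 : forall x y, 0 <= w x y.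

Lemma path_length_cons_ge (x a : X) (s : seq X) :
  w x a <= path_length w x (a :: s).
Proof.
rewrite /path_length /= big_cons /= leeDl //.
by apply: sume_ge0 => p _; apply: w_ge0.
Qed.

Lemma delta_w_ge_weight_lbound (x : X) (e : \bar R) :
  (forall a, a <> x -> e <= w x a) -> forall y, y <> x -> e <= delta_w w x y.
Proof.
move=> le_e y yx; apply/ereal_infP => _ [[|a s] [uniq_path last_path] <-].
  by case: yx; rewrite -last_path.
apply: le_trans (path_length_cons_ge x a s); apply: le_e => ax.
by move: uniq_path; rewrite /= inE ax eqxx.
Qed.

End WeightedPaths.

Lemma weight_off_diag_lbound (R : realType) (X : choiceType) (w : X -> X -> \bar R) :
  is_weight w -> ess_locally_finite w ->
  forall x, exists2 e : R, (0 < e)%R & forall a, a <> x -> e%:E <= w x a.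
Proof.
move=> [_ [w_ge0 w_eq0]] w_fin x.
have [e e_gt0 le_e] : exists2 e : R, (0 < e)%R &
    forall a, ([set a | w x a < 1%:E] `\ x) a -> e%:E <= w x a.
  apply: finite_set_pos_lbound; first exact/finite_setD/w_fin.
  move=> a [_ ax]; rewrite lt_neqAle w_ge0 andbT eq_sym.
  by apply/eqP => /w_eq0 xa; apply: ax; rewrite xa.
exists (Num.min e 1%R); first by rewrite lt_min e_gt0 ltr01.
move=> a ax; have [lt_wa1|] := ltP (w x a) 1%:E.
  by apply: le_trans (le_e a (conj lt_wa1 ax)); rewrite lee_fin ge_min lexx.
by apply: le_trans; rewrite lee_fin ge_min lexx orbT.
Qed.

Theorem lemma2p2 (R : realType) (X : countType) (w : X -> X -> \bar R) :
  is_weight w -> ess_locally_finite w -> discrete_pseudometric (delta_w w).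
Proof.
move=> w_weight w_fin x.
have [e e_gt0 le_e] := weight_off_diag_lbound w_weight w_fin x.
exists e; split=> // y lt_delta_e; apply: contrapT => yx.
have [_ [w_ge0 _]] := w_weight.
by move: lt_delta_e; rewrite ltNge (delta_w_ge_weight_lbound w_ge0 le_e yx).
Qed.
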